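(* Let $r\ge3$, and let $M,N\in\mathrm{EKP}(K_r)$ be indecomposable with $M\not\cong P_0(r)$. Then: (1) $\lim_{n\to\infty}\nu(\sigma_{K_r}^{-n}(M))=L_r$. (2) The sequence $(\mu(\sigma_{K_r}^{-n}(M)))_{n\in\mathbb N_0}$ converges to $\frac1{L_r-1}$. (3) If $M$ is regular, then $(\mu(\sigma_{K_r}^{-n}(M)))_{n\in\mathbb N_0}$ is strictly decreasing. (4) If $M$ is regular and $N$ is preprojective, then $\mu(N)<\frac1{L_r-1}<\mu(M)$.
   Context: $k$ algebraically closed of arbitrary characteristic; $K_r$ the Kronecker quiver with arrows $\gamma_1,\dots,\gamma_r:1\to2$, $A_r=\bigoplus_ik\gamma_i$. $\mathrm{EKP}(K_r)$: representations $M=(M_1,M_2,(M(\gamma_i)))$ with $\sum_ia_iM(\gamma_i)$ injective for all $0\ne(a_i)\in k^r$. $P_0(r)=(0,k)$. For $M\in\mathrm{EKP}(K_r)$ nonzero, $\mu(M)=\dim_kM_1/(\dim_kM_2-\dim_kM_1)$; for $N$ with $N_1\ne0$, $\nu(N)=\dim_kN_2/\dim_kN_1$. $L_r=\frac{r+\sqrt{r^2-4}}2$. $\sigma_{K_r}^{-1}(M)=(M_2,\mathrm{coker}\,\varphi)$ where $\varphi:M_1\to M_2^r$, $m\mapsto(M(\gamma_i)m)_i$, and $\sigma_{K_r}^{-1}(M)(\gamma_i)$ is the $i$-th inclusion $M_2\to M_2^r$ followed by projection to $\mathrm{coker}\,\varphi$; $\sigma^{-n}_{K_r}$ is its $n$-fold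 iterate (it maps $\mathrm{EKP}(K_r)$ into itself). An indecomposable representation is preprojective (preinjective) if $\tau_{K_r}^n$ ($\tau_{K_r}^{-n}$) kills it for some $n$, $\tau_{K_r}$ the Auslander–Reiten translation; it is regular if it is neither. *)

From HB Require Import structures.
From mathcomp Require Import all_boot all_order all_algebra.
From mathcomp Require Import all_classical all_reals all_analysis.
Set Implicit Arguments. Unset Strict Implicit. Unset Printing Implicit Defensive.
Import Order.TTheory GRing.Theory Num.Theory.
Local Open Scope ring_scope.

(* Finite-dimensional representations of the r-Kronecker quiver K_r over k:
   M_1 = k^(rd1), M_2 = k^(rd2), and M(gamma_i) is the matrix (rmat M i),
   acting on ROW vectors: m |-> m *m rmat M i. *)
Record krep (k : fieldType) (r : nat) := KRep {
  rd1 : nat;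
  rd2 : nat;
  rmat : 'I_r -> 'M[k]_(rd1, rd2) }.

Section Kronecker.
Variables (k : fieldType) (r : nat).
Implicit Types M N : krep k r.

Definition is_zero_rep M := (rd1 M = 0%N) /\ (rd2 M = 0%N).

Definition P0 : krep k r := @KRep k r 0 1 (fun _ => 0).

Definition krep_iso M N :=
  exists (f1 : 'M[k]_(rd1 M, rd1 N)) (f2 : 'M[k]_(rd2 M, rd2 N)),
    [/\ row_free f1 && row_full f1, row_free f2 && row_full f2 &
        forall i, rmat M i *m f2 = f1 *m rmat N i].

Definition EKP M :=
  forall a : 'rV[k]_r, a != 0 -> row_free (\sum_(i < r) a 0 i *: rmat M i).

(* subrepresentations, given by subspaces U1 of M_1 and U2 of M_2
   (row spaces of the matrices) *)
Definition subrep M (U1 : 'M[k]_(rd1 M)) (U2 : 'M[k]_(rd2 M)) :=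
  forall i, (U1 *m rmat M i <= U2)%MS.

Definition decomposable M :=
  exists (U1 V1 : 'M[k]_(rd1 M)) (U2 V2 : 'M[k]_(rd2 M)),
    [/\ subrep U1 U2, subrep V1 V2,
        (\rank U1 + \rank V1 = rd1 M)%N /\ (1%:M <= U1 + V1)%MS,
        (\rank U2 + \rank V2 = rd2 M)%N /\ (1%:M <= U2 + V2)%MS &
        (0 < \rank U1 + \rank U2)%N /\ (0 < \rank V1 + \rank V2)%N].

Definition indecomposable M := (0 < rd1 M + rd2 M)%N /\ ~ decomposable M.

(* sigma^{-1}_{K_r}(M) = (M_2, coker phi), phi : M_1 -> M_2^r, m |-> (M(gamma_i) m)_i *)
Definition phi_mx M : 'M[k]_(rd1 M, \sum_(j < r) rd2 M) :=
  \mxrow_(j < r) rmat M j.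
Definition incl_mx M (i : 'I_r) : 'M[k]_(rd2 M, \sum_(j < r) rd2 M) :=
  \mxrow_(j < r) (if j == i then 1%:M else 0 : 'M[k]_(rd2 M)).
(* projection onto the cokernel: its row kernel is exactly the image of phi
   and it has full column rank *)
Definition coker_proj M := col_base (cokermx (phi_mx M)).
Definition sigma_inv M : krep k r :=
  @KRep k r (rd2 M) (\rank (cokermx (phi_mx M)))
        (fun i => incl_mx M i *m coker_proj M).

(* sigma_{K_r}(M) = (ker psi, M_1), psi : M_1^r -> M_2, (m_i) |-> sum_i M(gamma_i) m_i;
   arrows are the restrictions of the projections M_1^r -> M_1 *)
Definition psi_mx M : 'M[k]_(\sum_(j < r) rd1 M, rd2 M) :=
  \mxcol_(j < r) rmat M j.
Definition proj_mx M (i : 'I_r) : 'M[k]_(\sum_(j < r) rd1 M, rd1 M) :=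
  \mxcol_(j < r) (if j == i then 1%:M else 0 : 'M[k]_(rd1 M)).
Definition ker_basis M := row_base (kermx (psi_mx M)).
Definition sigma M : krep k r :=
  @KRep k r (\rank (kermx (psi_mx M))) (rd1 M)
        (fun i => ker_basis M *m proj_mx M i).

(* Auslander-Reiten translation via the Coxeter functors: tau = sigma^2,
   tau^{-1} = sigma^{-2} *)
Definition tau M := sigma (sigma M).
Definition tau_inv M := sigma_inv (sigma_inv M).

Definition preprojective M :=
  indecomposable M /\ exists n : nat, is_zero_rep (iter n tau M).
Definition preinjective M :=
  indecomposable M /\ exists n : nat, is_zero_rep (iter n tau_inv M).
Definition regular M :=
  indecomposable M /\ ~ preprojective M /\ ~ preinjective M.

Definition mu (R : realType) M : R :=
  (rd1 M)%:R / ((rd2 M)%:R - (rd1 M)%:R).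
Definition nu (R : realType) M : R := (rd2 M)%:R / (rd1 M)%:R.

End Kronecker.

Definition L_r (R : realType) (r : nat) : R :=
  (r%:R + Num.sqrt (r%:R ^+ 2 - 4)) / 2.

(* Write (a_n, b_n) for the dimension vector of sigma^-n M. As the arrows of M
   are injective, sigma^-1 acts on dimension vectors by (a, b) |-> (b, r b - a),
   so the defect b_n - L_r a_n is divided by L_r at each step (L_r being the
   larger root of x^2 - r x + 1); this gives (1) and (2).
   Reflecting the other way, sigma maps an indecomposable X with
   L_r dim X_1 <= dim X_2 to a strictly smaller indecomposable of the same
   kind, because a decomposition of sigma X pushes forward along
   psi : X_1^r -> X_2 (whose kernel is the first space of sigma X); hence such
   an X is preprojective, whereas tau never kills X when 0 < dim X_1 and
   dim X_2 <= L_r dim X_1. So a regular M has b_0 < L_r a_0: all defects are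
   negative, which makes mu decrease along the orbit and stay above
   1/(L_r - 1), while mu(N) < 1/(L_r - 1) for preprojective N. Over an
   algebraically closed field a_0 < b_0 for regular M, since a square pencil
   s A_1 + t A_2 always has a singular member. *)

From Pilot Require Import Defs.
From HB Require Import structures.
From mathcomp Require Import all_boot all_order all_algebra.
From mathcomp Require Import all_classical all_reals all_analysis.
From mathcomp Require Import ring lra zify.
Import Order.TTheory GRing.Theory Num.Theory.
Import numFieldNormedType.Exports.
Local Open Scope classical_set_scope.
Local Open Scope ring_scope.

Set Implicit Arguments. Unset Strict Implicit. Unset Printing Implicit Defensive.

Section BlockSubspaces.
Variable k : fieldType.

Lemma capmx_mul_eq0 m1 m2 n p (P : 'M[k]_(m1, n)) (Q : 'M[k]_(m2, n))
    (f : 'M[k]_(n, p)) :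
  (P :&: Q)%MS = 0 ->
  (kermx f <= (P :&: kermx f) + (Q :&: kermx f))%MS ->
  (P *m f :&: Q *m f)%MS = 0.
Proof.
move=> PQ0 kerPQ.
have /submxP[a eCa] := capmxSl (P *m f) (Q *m f).
have /submxP[b eCb] := capmxSr (P *m f) (Q *m f).
have : (a *m P - b *m Q <= kermx f)%MS.
  by apply/sub_kermxP; rewrite mulmxBl -!mulmxA -eCa -eCb subrr.
move=> /submx_trans/(_ kerPQ)/sub_addsmxP[[u v] /= e].
have aPu : a *m P = u *m (P :&: kermx f)%MS.
  apply/eqP; rewrite -subr_eq0 -submx0 -PQ0 sub_capmx; apply/andP; split.
    rewrite addmx_sub ?submxMl // eqmx_opp.
    exact: submx_trans (submxMl _ _) (capmxSl _ _).
  have -> : a *m P - u *m (P :&: kermx f)%MS = b *m Q + v *m (Q :&: kermx f)%MS.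
    by apply/eqP; rewrite subr_eq -addrA [v *m _ + _]addrC -e addrC subrK.
  by rewrite addmx_sub ?submxMl // (submx_trans (submxMl _ _) (capmxSl _ _)).
rewrite eCa mulmxA aPu -mulmxA.
by have /sub_kermxP -> := capmxSr P (kermx f); rewrite mulmx0.
Qed.

Lemma capmx_eq0_of_rank n (U V : 'M[k]_n) :
  (\rank U + \rank V)%N = n -> (1%:M <= U + V)%MS -> (U :&: V)%MS = 0.
Proof.
move=> rkUV; rewrite sub1mx => /eqP rk_sum.
by apply/mxdirect_addsP; rewrite mxdirectE /= rk_sum rkUV.
Qed.

Variable r : nat.

Lemma submx_mxdiagP n m (U : 'M[k]_n) (Z : 'M[k]_(m, \sum_(j < r) n)) :
  reflect (forall j, (submxrow Z j <= U)%MS) (Z <= \mxdiag_(j < r) U)%MS.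
Proof.
apply: (iffP idP) => [/submxP[W ->] j | ZU].
  by rewrite -[W]submxrowK mul_mxrow_mxdiag mxrowK submxMl.
apply/submxP; exists (\mxrow_j (submxrow Z j *m pinvmx U)).
rewrite mul_mxrow_mxdiag -[LHS]submxrowK.
by apply: eq_mxrow => j; rewrite mulmxKpV.
Qed.

Lemma capmx_mxdiag_eq0 n (U V : 'M[k]_n) :
  (U :&: V)%MS = 0 -> (\mxdiag_(j < r) U :&: \mxdiag_(j < r) V)%MS = 0.
Proof.
move=> UV0; have diag0 : \mxdiag_(j < r) (U :&: V)%MS = 0 by rewrite UV0 mxdiag0.
apply/eqP; rewrite -submx0 -diag0.
have /submx_mxdiagP CU := capmxSl (\mxdiag_(j < r) U) (\mxdiag_(j < r) V).
have /submx_mxdiagP CV := capmxSr (\mxdiag_(j < r) U) (\mxdiag_(j < r) V).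
by apply/submx_mxdiagP => j; rewrite sub_capmx CU CV.
Qed.

End BlockSubspaces.

Section SigmaInverse.
Variables (k : fieldType) (r : nat).
Implicit Types X : krep k r.

Lemma sumn_ord_const n : (\sum_(j < r) n)%N = (r * n)%N.
Proof. by rewrite big_const_ord iter_addn_0 mulnC. Qed.

Lemma sum_delta_mx_scale m n (F : 'I_r -> 'M[k]_(m, n)) i :
  \sum_j (delta_mx 0 i : 'rV[k]_r) 0 j *: F j = F i.
Proof.
rewrite (bigD1 i) //= mxE !eqxx scale1r big1 ?addr0 // => j /negbTE nji.
by rewrite mxE nji andbF scale0r.
Qed.

Lemma delta_mx_neq0 (i : 'I_r) : (delta_mx 0 i : 'rV[k]_r) != 0.
Proof. by apply/eqP => /matrixP/(_ 0 i)/eqP; rewrite !mxE !eqxx oner_eq0. Qed.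

Lemma exists_ord_neq (i : 'I_r) : (1 < r)%N -> exists j : 'I_r, j != i.
Proof.
move=> r_gt1; have [i0|i_gt0] := posnP i.
  by exists (Ordinal r_gt1); rewrite -val_eqE /= i0.
have r_gt0 : (0 < r)%N by apply: ltnW.
by exists (Ordinal r_gt0); rewrite -val_eqE /= eq_sym -lt0n.
Qed.

Lemma mul_psi_mx X m (Z : 'M[k]_(m, \sum_(j < r) rd1 X)) :
  Z *m psi_mx X = \sum_j submxrow Z j *m rmat X j.
Proof. by rewrite -{1}(submxrowK Z) mul_mxrow_mxcol. Qed.

Lemma mul_proj_mx X m (Z : 'M[k]_(m, \sum_(j < r) rd1 X)) i :
  Z *m Defs.proj_mx X i = submxrow Z i.
Proof.
rewrite -{1}(submxrowK Z) mul_mxrow_mxcol (bigD1 i) //= eqxx mulmx1.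
by rewrite big1 ?addr0 // => j /negbTE ->; rewrite mulmx0.
Qed.

Lemma mul_phi_mx X m (Z : 'M[k]_(m, rd1 X)) :
  Z *m phi_mx X = \mxrow_j (Z *m rmat X j).
Proof. exact: mul_mxrow. Qed.

Lemma mul_incl_mx X m (Z : 'M[k]_(m, rd2 X)) i :
  Z *m incl_mx X i = \mxrow_j (if j == i then Z else 0).
Proof.
rewrite mul_mxrow; apply: eq_mxrow => j.
by case: (j == i); rewrite ?mulmx1 ?mulmx0.
Qed.

Lemma EKP_row_free X i : EKP X -> row_free (rmat X i).
Proof. by move=> /(_ _ (delta_mx_neq0 i)); rewrite sum_delta_mx_scale. Qed.

Lemma EKP_rd1_le_rd2 X : (0 < r)%N -> EKP X -> (rd1 X <= rd2 X)%N.
Proof.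
move=> r_gt0 /(EKP_row_free (Ordinal r_gt0)).
by rewrite /row_free => /eqP <-; apply: rank_leq_col.
Qed.

Lemma row_free_phi_mx X i : row_free (rmat X i) -> row_free (phi_mx X).
Proof.
move=> free_i; apply: inj_row_free => v.
rewrite mul_phi_mx => /(congr1 (fun A => submxrow A i)); rewrite mxrowK submxrow0.
by move/eqP; rewrite mulmx_free_eq0 // => /eqP.
Qed.

Hypothesis r_gt1 : (1 < r)%N.

Lemma row_free_sigma_inv X : (forall i, row_free (rmat X i)) ->
  forall i, row_free (rmat (sigma_inv X) i).
Proof.
move=> freeX i; apply: inj_row_free => v /=; rewrite mulmxA => v_coker0.
have : (v *m incl_mx X i <= phi_mx X)%MS.
  rewrite submxE -(mulmx_base (cokermx (phi_mx X))) mulmxA.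
  by rewrite /coker_proj in v_coker0; rewrite v_coker0 mul0mx.
case/submxP => x; rewrite mul_incl_mx mul_phi_mx => e.
have [j nji] := exists_ord_neq i r_gt1.
have /esym/eqP := congr1 (fun A => submxrow A j) e; rewrite !mxrowK (negbTE nji).
rewrite mulmx_free_eq0 // => /eqP x0.
by have := congr1 (fun A => submxrow A i) e; rewrite !mxrowK eqxx x0 mul0mx.
Qed.

Lemma sigma_inv_rd2 X : (forall i, row_free (rmat X i)) ->
  rd2 (sigma_inv X) = (r * rd2 X - rd1 X)%N.
Proof.
move=> freeX; have r_gt0 : (0 < r)%N by apply: ltnW.
rewrite /= mxrank_coker [n in (n - _)%N]sumn_ord_const.
by have := row_free_phi_mx (freeX (Ordinal r_gt0)); rewrite /row_free => /eqP ->.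
Qed.

Lemma iter_sigma_inv_row_free X n : (forall i, row_free (rmat X i)) ->
  forall i, row_free (rmat (iter n (@sigma_inv k r) X) i).
Proof.
move=> freeX; elim: n => [|n IHn] //=; exact: row_free_sigma_inv.
Qed.

End SigmaInverse.

Section Sigma.
Variables (k : fieldType) (r : nat).
Implicit Types X : krep k r.

Lemma sigma_rd1 X : rd1 (sigma X) = (r * rd1 X - \rank (psi_mx X))%N.
Proof. by rewrite /= mxrank_ker [n in (n - _)%N]sumn_ord_const. Qed.

Lemma rank_psi_mx_le X : (\rank (psi_mx X) <= rd2 X)%N.
Proof. exact: rank_leq_col. Qed.

Lemma arrow_sub_psi_mx X i : (rmat X i <= psi_mx X)%MS.
Proof.
apply/submxP; exists (\mxrow_j (if j == i then 1%:M else 0 : 'M[k]_(rd1 X))).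
rewrite mul_psi_mx (bigD1 i) //= mxrowK eqxx mul1mx big1 ?addr0 // => j /negbTE nji.
by rewrite mxrowK nji mul0mx.
Qed.

Lemma psi_mx_sub X m (B : 'M[k]_(m, rd2 X)) :
  (forall i, (rmat X i <= B)%MS) -> (psi_mx X <= B)%MS.
Proof.
move=> sub_arrows; rewrite -[psi_mx X]mul1mx mul_psi_mx; apply: summx_sub => i _.
exact: submx_trans (submxMl _ _) (sub_arrows i).
Qed.

Lemma row_full_psi_mx X : indecomposable X -> (0 < rd1 X)%N -> row_full (psi_mx X).
Proof.
move=> [_ indecX] rd1_gt0; case: (boolP (row_full _)) => // not_full.
case: indecX.
have rk_lt : (\rank (psi_mx X) < rd2 X)%N.
  by rewrite ltn_neqAle not_full rank_psi_mx_le.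
exists 1%:M, 0, <<psi_mx X>>%MS, (<<psi_mx X>>%MS)^C%MS; split.
- by move=> i; rewrite mul1mx genmxE arrow_sub_psi_mx.
- by move=> i; rewrite mul0mx sub0mx.
- by rewrite mxrank1 mxrank0 addn0 addsmxSl.
- by rewrite mxrank_compl subnKC ?rank_leq_col // sub1mx addsmx_compl_full.
- rewrite mxrank1 mxrank0 mxrank_compl mxrank_gen subn_gt0.
  by split; [apply: leq_trans rd1_gt0 (leq_addr _ _) | exact: rk_lt].
Qed.

Lemma ker_basis_sub_kermx X : (ker_basis X <= kermx (psi_mx X))%MS.
Proof. by rewrite /ker_basis eq_row_base. Qed.

Lemma subrep_sigma_sub_mxdiag X U1 U2 : @subrep _ _ (sigma X) U1 U2 ->
  (U1 *m ker_basis X <= \mxdiag_(j < r) U2)%MS.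
Proof. by move=> sU; apply/submx_mxdiagP => j; rewrite -mul_proj_mx -mulmxA sU. Qed.

Lemma subrep_sigma_eq0 X U1 U2 : @subrep _ _ (sigma X) U1 U2 ->
  U2 = 0 -> U1 = 0.
Proof.
move=> /subrep_sigma_sub_mxdiag sU U20; apply/eqP.
rewrite -(mulmx_free_eq0 _ (row_base_free (kermx (psi_mx X)))) -submx0.
by rewrite U20 mxdiag0 in sU.
Qed.

Lemma arrow_sub_mxdiag_psi_mx X (U : 'M[k]_(rd1 X)) i :
  (U *m rmat X i <= \mxdiag_(j < r) U *m psi_mx X)%MS.
Proof.
set Z := \mxrow_(j < r) (if j == i then U else 0).
have -> : U *m rmat X i = Z *m psi_mx X.
  rewrite mul_psi_mx (bigD1 i) //= mxrowK eqxx big1 ?addr0 // => j /negbTE nji.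
  by rewrite mxrowK nji mul0mx.
apply: submxMr; apply/submx_mxdiagP => j; rewrite mxrowK.
by case: (j == i); rewrite ?sub0mx.
Qed.

Lemma indecomposable_sigma X : indecomposable X -> (0 < rd1 X)%N ->
  indecomposable (sigma X).
Proof.
move=> indecX rd1_gt0; have full_psi := row_full_psi_mx indecX rd1_gt0.
case: indecX => _ indecX; split; first by rewrite /= addnC ltn_addr.
case=> U1 [V1 [U2 [V2 [sU sV [rk1 full1] [rk2 full2] [U_gt0 V_gt0]]]]].
pose W (U : 'M[k]_(rd1 X)) := (\mxdiag_(j < r) U *m psi_mx X)%MS.
(* ker psi splits along U1 + V1 into parts lying in U2^r and in V2^r. *)
have capW : (W U2 :&: W V2)%MS = 0.
  apply: capmx_mul_eq0; first exact/capmx_mxdiag_eq0/capmx_eq0_of_rank.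
  have ker_sub : (kermx (psi_mx X) <= ker_basis X)%MS.
    by rewrite /ker_basis eq_row_base.
  apply: submx_trans ker_sub _.
  rewrite -[ker_basis X]mul1mx; apply: submx_trans (submxMr _ full1) _.
  rewrite addsmxMr; apply: addsmxS; rewrite sub_capmx subrep_sigma_sub_mxdiag //;
    exact: submx_trans (submxMl _ _) (ker_basis_sub_kermx X).
have fullW : (1%:M <= W U2 + W V2)%MS.
  apply: submx_trans (_ : 1%:M <= psi_mx X)%MS _; first by rewrite sub1mx.
  apply: psi_mx_sub => i; rewrite -[rmat X i]mul1mx.
  apply: submx_trans (submxMr _ full2) _.
  by rewrite addsmxMr addsmxS ?arrow_sub_mxdiag_psi_mx.
have rank_gt0 U U' : @subrep _ _ (sigma X) U' U ->
    (0 < \rank U' + \rank U)%N -> (0 < \rank U)%N.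
  move=> sU' rk_gt0; rewrite lt0n mxrank_eq0; apply/eqP => U0.
  by move: rk_gt0; rewrite (subrep_sigma_eq0 sU' U0) U0 !mxrank0.
apply: indecX; exists U2, V2, <<W U2>>%MS, <<W V2>>%MS; split => //.
- by move=> i; rewrite genmxE arrow_sub_mxdiag_psi_mx.
- by move=> i; rewrite genmxE arrow_sub_mxdiag_psi_mx.
- rewrite (adds_eqmx (genmxE _) (genmxE _)) !mxrank_gen; split => //.
  have /mxdirect_addsP := capW; rewrite mxdirectE /= => /eqP <-.
  by move: fullW; rewrite sub1mx => /eqP.
- by split; apply: leq_trans (leq_addr _ _); apply: rank_gt0.
Qed.

End Sigma.

Lemma exists_pencil_not_row_free (k : closedFieldType) n m (A1 A2 : 'M[k]_(n, m)) :
  (0 < n)%N -> (m <= n)%N -> row_free A1 -> exists lam, ~~ row_free (A2 - lam *: A1).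
Proof.
move=> n_gt0 le_mn /row_freeP[B A1B].
have freeB : row_free B.
  rewrite /row_free eqn_leq rank_leq_row; apply: leq_trans le_mn _.
  by rewrite -[n in (n <= _)%N](mxrank1 k n) -A1B mxrankM_maxr.
have [lam] : exists lam, eigenvalue (A2 *m B) lam.
  have : size (char_poly (A2 *m B)) != 1%N by rewrite size_char_poly -lt0n.
  by case/closed_rootP => lam; rewrite -eigenvalue_root_char; exists lam.
case/eigenvalueP => v vC v_neq0; exists lam; apply: contraNN v_neq0 => free_pencil.
rewrite -(mulmx_free_eq0 _ free_pencil) -(mulmx_free_eq0 _ freeB) -mulmxA.
by rewrite mulmxBl -scalemxAl A1B mulmxBr vC -scalemxAr mulmx1 subrr.
Qed.

Lemma EKP_rd1_lt_rd2 (k : closedFieldType) r (X : krep k r) :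
  (1 < r)%N -> EKP X -> (0 < rd1 X)%N -> (rd1 X < rd2 X)%N.
Proof.
move=> r_gt1 ekpX rd1_gt0; have r_gt0 : (0 < r)%N by apply: ltnW.
rewrite ltn_neqAle EKP_rd1_le_rd2 // andbT; apply/eqP => rd_eq.
set i1 := Ordinal r_gt0; have [i2 n21] := exists_ord_neq i1 r_gt1.
have [lam not_free] := exists_pencil_not_row_free (rmat X i2) rd1_gt0
  (eq_leq (esym rd_eq)) (EKP_row_free i1 ekpX).
pose a := (delta_mx 0 i2 - lam *: delta_mx 0 i1 : 'rV[k]_r).
have a_neq0 : a != 0.
  apply/eqP => /matrixP/(_ 0 i2)/eqP; rewrite !mxE !eqxx (negbTE n21) /=.
  by rewrite mulr0 subr0 oner_eq0.
have := ekpX a a_neq0.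
suff -> : \sum_(i < r) a 0 i *: rmat X i = rmat X i2 - lam *: rmat X i1.
  by rewrite (negbTE not_free).
have a_coef j :
    a 0 j = (delta_mx 0 i2 : 'rV[k]_r) 0 j - lam * (delta_mx 0 i1 : 'rV[k]_r) 0 j.
  by rewrite !mxE.
under eq_bigr do rewrite a_coef scalerBl -scalerA.
by rewrite sumrB -scaler_sumr !sum_delta_mx_scale.
Qed.

Section KroneckerConstant.
Variables (R : realType) (r : nat).
Hypothesis r_ge3 : (3 <= r)%N.
Local Notation l := (L_r R r).

Lemma natr_ge3 : 3 <= r%:R :> R.
Proof. by rewrite (ler_nat R 3 r). Qed.

Lemma Lr_sqr : l ^+ 2 = r%:R * l - 1.
Proof.
have := natr_ge3; rewrite /L_r => r3.
have /sqr_sqrtr : 0 <= r%:R ^+ 2 - 4 :> R by nra.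
set s := Num.sqrt _ => s2; apply/eqP; rewrite -subr_eq0; apply/eqP; nra.
Qed.

Lemma natr_lt_double_Lr : r%:R < 2 * l.
Proof.
have := natr_ge3; rewrite /L_r => r3.
have : 0 < Num.sqrt (r%:R ^+ 2 - 4 : R) by rewrite sqrtr_gt0; nra.
lra.
Qed.

Lemma Lr_gt1 : 1 < l.
Proof. by have := natr_lt_double_Lr; have := natr_ge3; lra. Qed.

Lemma mu_ratio_lt_inv_Lr_pred (a b : R) :
  0 < a -> l * a < b -> a / (b - a) < (l - 1)^-1.
Proof.
move=> a_gt0 lab; have := Lr_gt1 => l_gt1.
rewrite -[(l - 1)^-1]div1r ltr_pdivrMr; last by nra.
by rewrite mulrAC ltr_pdivlMr; nra.
Qed.

Lemma inv_Lr_pred_lt_mu_ratio (a b : R) :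
  a < b -> b < l * a -> (l - 1)^-1 < a / (b - a).
Proof.
move=> ab lab; have := Lr_gt1 => l_gt1.
rewrite -[(l - 1)^-1]div1r ltr_pdivrMr; last by lra.
by rewrite mulrAC ltr_pdivlMr; nra.
Qed.

Lemma mu_ratio_step_lt (a b : R) : 0 < a -> a < b -> b < l * a ->
  b / (r%:R * b - a - b) < a / (b - a).
Proof.
move=> a_gt0 ab lab; have := Lr_gt1 => l_gt1; have := Lr_sqr => l2.
have := natr_ge3 => r3.
have factor : (b - l * a) * (l * b - a) = l * (b * b - r%:R * a * b + a * a).
  apply/eqP; rewrite -subr_eq0; apply/eqP.
  transitivity (- (a * b) * (l ^+ 2 - (r%:R * l - 1))); first ring.
  by rewrite l2 subrr mulr0.
have quad_lt0 : b * b - r%:R * a * b + a * a < 0.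
  have : (b - l * a) * (l * b - a) < 0 by rewrite pmulr_llt0; nra.
  by rewrite factor pmulr_rlt0; lra.
rewrite ltr_pdivrMr; last by nra.
by rewrite mulrAC ltr_pdivlMr; nra.
Qed.

End KroneckerConstant.

Section DimensionRecurrence.
Variables (R : realType) (r : nat) (d1 d2 : nat -> nat).
Hypothesis r_ge3 : (3 <= r)%N.
Hypothesis d1S : forall n, d1 n.+1 = d2 n.
Hypothesis d2S : forall n, d2 n.+1 = (r * d2 n - d1 n)%N.
Hypothesis d1_le_d2_0 : (d1 0 <= d2 0)%N.
Hypothesis d2_gt0_0 : (0 < d2 0)%N.
Local Notation l := (L_r R r).

Lemma d1_le_d2 n : (d1 n <= d2 n)%N /\ (0 < d2 n)%N.
Proof. by elim: n => [|n [le_n gt0_n]] //; rewrite d1S d2S; split; nia. Qed.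

Lemma d1_gt0 n : (0 < n)%N -> (0 < d1 n)%N.
Proof. by case: n => // n _; rewrite d1S; case: (d1_le_d2 n). Qed.

Lemma d1_lt_d2 n : (0 < n)%N -> (d1 n < d2 n)%N.
Proof. by case: n => // n _; rewrite d1S d2S; case: (d1_le_d2 n) => *; nia. Qed.

Lemma natr_d2S n : (d2 n.+1)%:R = r%:R * (d2 n)%:R - (d1 n)%:R :> R.
Proof. by rewrite d2S natrB ?natrM //; case: (d1_le_d2 n) => *; nia. Qed.

Definition defect n : R := (d2 n)%:R - l * (d1 n)%:R.

Lemma defectS n : defect n.+1 * l = defect n.
Proof.
rewrite /defect natr_d2S d1S; apply/eqP; rewrite -subr_eq0; apply/eqP.
transitivity (- (d2 n)%:R * (l ^+ 2 - (r%:R * l - 1)) : R); first ring.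
by rewrite Lr_sqr // subrr mulr0.
Qed.

Lemma defectE n : defect n = defect 0 * l^-1 ^+ n.
Proof.
have l_neq0 : l != 0 by have := Lr_gt1 R r_ge3; lra.
elim: n => [|n IHn]; first by rewrite mulr1.
by rewrite exprS mulrCA -IHn -(defectS n) mulrC mulfK.
Qed.

Lemma nu_ratio_dist_le n : (0 < n)%N ->
  `|(d2 n)%:R / (d1 n)%:R - l| <= `|defect 0| * l^-1 ^+ n.
Proof.
move=> n_gt0; have d1_ge1 : 1 <= (d1 n)%:R :> R by rewrite ler1n d1_gt0.
have l_gt1 := Lr_gt1 R r_ge3.
have -> : (d2 n)%:R / (d1 n)%:R - l = defect n / (d1 n)%:R by rewrite /defect; field; lra.
rewrite normrM normfV (ger0_norm (ler0n _ _)).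
apply: (@le_trans _ _ `|defect n|).
  by rewrite ler_pdivrMr ?ler_peMr //; lra.
by rewrite defectE normrM (ger0_norm (exprn_ge0 _ _)) // invr_ge0; lra.
Qed.

Lemma nu_ratio_cvg : (fun n => (d2 n)%:R / (d1 n)%:R : R) @ \oo --> l.
Proof.
have l_gt1 := Lr_gt1 R r_ge3.
have err_cvg : (fun n => `|defect 0| * l^-1 ^+ n) @ \oo --> (0 : R).
  have pow_cvg : (fun n => l^-1 ^+ n) @ \oo --> (0 : R).
    by apply: cvg_expr; rewrite ger0_norm ?invf_lt1 ?invr_ge0; lra.
  by rewrite -(mulr0 `|defect 0|); apply: cvgM => //; exact: cvg_cst.
apply: (squeeze_cvgr (f := fun n => l - `|defect 0| * l^-1 ^+ n)
                     (h := fun n => l + `|defect 0| * l^-1 ^+ n)).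
- by exists 1%N => // n /nu_ratio_dist_le; rewrite ler_distl.
- by rewrite -[X in _ --> X]subr0; apply: cvgB => //; apply: cvg_cst.
- by rewrite -[X in _ --> X]addr0; apply: cvgD => //; apply: cvg_cst.
Qed.

Lemma mu_ratio_cvg :
  (fun n => (d1 n)%:R / ((d2 n)%:R - (d1 n)%:R) : R) @ \oo --> (l - 1)^-1.
Proof.
have l_gt1 := Lr_gt1 R r_ge3.
rewrite -cvg_shiftS.
have -> : [sequence (d1 n.+1)%:R / ((d2 n.+1)%:R - (d1 n.+1)%:R) : R]_n
          = (fun n => ((d2 n.+1)%:R / (d1 n.+1)%:R - 1)^-1).
  apply/funext => n /=; have : 0 < (d1 n.+1)%:R :> R by rewrite ltr0n d1_gt0.
  by move=> d1_gt0; rewrite -invf_div; congr (_^-1); field; lra.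
apply: cvgV; first lra.
apply: cvgB; last exact: cvg_cst.
by have := nu_ratio_cvg; rewrite -cvg_shiftS.
Qed.

Lemma mu_ratio_decreasing : (0 < d1 0)%N -> (d1 0 < d2 0)%N -> defect 0 < 0 ->
  forall n, (d1 n.+1)%:R / ((d2 n.+1)%:R - (d1 n.+1)%:R)
            < (d1 n)%:R / ((d2 n)%:R - (d1 n)%:R) :> R.
Proof.
move=> d1_gt0_0 d1_lt_d2_0 defect0_lt0 n.
have l_gt1 := Lr_gt1 R r_ge3.
have defect_lt0 : defect n < 0.
  by rewrite defectE pmulr_llt0 // exprn_gt0 // invr_gt0; lra.
rewrite natr_d2S d1S; apply: mu_ratio_step_lt => //.
- by case: n {defect_lt0} => [|n]; rewrite ltr0n // d1_gt0.
- by case: n {defect_lt0} => [|n]; rewrite ltr_nat // d1_lt_d2.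
- by rewrite -subr_lt0.
Qed.

End DimensionRecurrence.

Section PreprojectiveCriterion.
Variables (R : realType) (k : fieldType) (r : nat).
Hypothesis r_ge3 : (3 <= r)%N.
Local Notation l := (L_r R r).
Implicit Types X : krep k r.

Lemma is_zero_rep_sigma X : rd1 X = 0%N -> is_zero_rep (sigma X).
Proof.
move=> rd1_eq0; split => //; apply/eqP; rewrite -leqn0.
by apply: leq_trans (rank_leq_row _) _; rewrite sumn_ord_const rd1_eq0 muln0.
Qed.

Lemma sigma_rd2_le_Lr X : (0 < rd1 X)%N -> (rd2 X)%:R <= l * (rd1 X)%:R ->
  (0 < rd1 (sigma X))%N /\ (rd2 (sigma X))%:R <= l * (rd1 (sigma X))%:R.
Proof.
move=> rd1_gt0 rd2_le; have l_gt1 := Lr_gt1 R r_ge3; have l2 := Lr_sqr R r_ge3.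
have rk_le : (\rank (psi_mx X))%:R <= (rd2 X)%:R :> R.
  by rewrite ler_nat rank_psi_mx_le.
have rd1_sigma : (rd1 (sigma X))%:R
                 = r%:R * (rd1 X)%:R - (\rank (psi_mx X))%:R :> R.
  by rewrite sigma_rd1 natrB ?natrM // -sumn_ord_const rank_leq_row.
have : 0 < (rd1 X)%:R :> R by rewrite ltr0n.
by split; [rewrite -(ltr0n R) rd1_sigma | rewrite /= rd1_sigma]; nra.
Qed.

Lemma iter_tau_neq0 n X : (0 < rd1 X)%N -> (rd2 X)%:R <= l * (rd1 X)%:R ->
  ~ is_zero_rep (iter n (@tau k r) X).
Proof.
elim: n X => [|n IHn] X rd1_gt0 rd2_le.
  by case=> /= rd1_eq0; rewrite rd1_eq0 in rd1_gt0.
have [rd1_gt0' rd2_le'] := sigma_rd2_le_Lr rd1_gt0 rd2_le.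
have [rd1_gt0'' rd2_le''] := sigma_rd2_le_Lr rd1_gt0' rd2_le'.
by rewrite iterSr; apply: IHn.
Qed.

Lemma sigma_Lr_le_rd2 X : indecomposable X -> (0 < rd1 X)%N ->
  l * (rd1 X)%:R <= (rd2 X)%:R ->
  [/\ indecomposable (sigma X), l * (rd1 (sigma X))%:R <= (rd2 (sigma X))%:R &
      (rd1 (sigma X) + rd2 (sigma X) < rd1 X + rd2 X)%N].
Proof.
move=> indecX rd1_gt0 rd2_ge; have l_gt1 := Lr_gt1 R r_ge3.
have l2 := Lr_sqr R r_ge3; have r_lt := natr_lt_double_Lr R r_ge3.
have /eqP rk_psi := row_full_psi_mx indecX rd1_gt0.
have rd1_sigma : (rd1 (sigma X))%:R = r%:R * (rd1 X)%:R - (rd2 X)%:R :> R.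
  by rewrite sigma_rd1 rk_psi natrB ?natrM // -rk_psi -sumn_ord_const rank_leq_row.
have : 0 < (rd1 X)%:R :> R by rewrite ltr0n.
split; first exact: indecomposable_sigma.
- by rewrite /= rd1_sigma; nra.
- by rewrite -(ltr_nat R) !natrD rd1_sigma /=; nra.
Qed.

Lemma iter_tau_eq0 X : indecomposable X -> l * (rd1 X)%:R <= (rd2 X)%:R ->
  exists n, is_zero_rep (iter n (@tau k r) X).
Proof.
have [s] := ubnP (rd1 X + rd2 X); elim: s X => // s IHs X size_lt indecX rd2_ge.
have [rd1_eq0|rd1_gt0] := posnP (rd1 X).
  by exists 1%N; apply/is_zero_rep_sigma; case: (is_zero_rep_sigma rd1_eq0).
have [indecY rd2_geY size_ltY] := sigma_Lr_le_rd2 indecX rd1_gt0 rd2_ge.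
have [rd1Y_eq0|rd1Y_gt0] := posnP (rd1 (sigma X)).
  by exists 1%N; apply: is_zero_rep_sigma.
have [indecZ rd2_geZ size_ltZ] := sigma_Lr_le_rd2 indecY rd1Y_gt0 rd2_geY.
have [n zero_n] : exists n, is_zero_rep (iter n (@tau k r) (tau X)).
  by apply: IHs => //; move: size_lt size_ltY size_ltZ; rewrite /tau; lia.
by exists n.+1; rewrite iterSr.
Qed.

Lemma regular_rd2_lt_Lr X : regular X -> (rd2 X)%:R < l * (rd1 X)%:R.
Proof.
case=> indecX [not_preproj _]; rewrite ltNge; apply/negP => rd2_ge.
by apply: not_preproj; split => //; apply: iter_tau_eq0.
Qed.

Lemma preprojective_mu_lt X : preprojective X -> mu R X < (l - 1)^-1.
Proof.
case=> _ [n zero_n]; have l_gt1 := Lr_gt1 R r_ge3.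
have [rd1_eq0|rd1_gt0] := posnP (rd1 X).
  by rewrite /mu rd1_eq0 mul0r invr_gt0; lra.
apply: mu_ratio_lt_inv_Lr_pred => //; first by rewrite ltr0n.
rewrite ltNge; apply/negP => rd2_le.
exact: iter_tau_neq0 rd1_gt0 rd2_le zero_n.
Qed.

End PreprojectiveCriterion.

Lemma regular_dims (R : realType) (k : closedFieldType) r (X : krep k r) :
  (3 <= r)%N -> EKP X -> regular X ->
  [/\ (0 < rd1 X)%N, (rd1 X < rd2 X)%N & (rd2 X)%:R < L_r R r * (rd1 X)%:R].
Proof.
move=> r_ge3 ekpX regX; have rd2_lt := regular_rd2_lt_Lr R r_ge3 regX.
have rd1_gt0 : (0 < rd1 X)%N.
  by rewrite lt0n; apply: contraTneq rd2_lt => ->; rewrite mulr0 ltNge ler0n.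
by split => //; apply: EKP_rd1_lt_rd2 => //; apply: leq_trans r_ge3.
Qed.

Theorem proposition6p2p1 (k : closedFieldType) (R : realType) (r : nat)
  (M N : krep k r) :
  (3 <= r)%N ->
  EKP M -> EKP N -> indecomposable M -> indecomposable N ->
  ~ krep_iso M (P0 k r) ->
  [/\ (fun n : nat => nu R (iter n (@sigma_inv k r) M)) @ \oo --> L_r R r,
      (fun n : nat => mu R (iter n (@sigma_inv k r) M)) @ \oo
        --> (L_r R r - 1)^-1,
      regular M ->
        forall n : nat, mu R (iter n.+1 (@sigma_inv k r) M)
                        < mu R (iter n (@sigma_inv k r) M) &
      regular M -> preprojective N ->
        mu R N < (L_r R r - 1)^-1 < mu R M].
Proof.
move=> r_ge3 ekpM _ [dim_gt0 _] _ _; have r_gt1 : (1 < r)%N by apply: leq_trans r_ge3.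
pose d1 n := rd1 (iter n (@sigma_inv k r) M).
pose d2 n := rd2 (iter n (@sigma_inv k r) M).
have d1S n : d1 n.+1 = d2 n by [].
have d2S n : d2 n.+1 = (r * d2 n - d1 n)%N.
  by apply/sigma_inv_rd2/iter_sigma_inv_row_free => // i; apply: EKP_row_free.
have d1_le_d2_0 : (d1 0 <= d2 0)%N by apply: EKP_rd1_le_rd2 (ltnW r_gt1) ekpM.
have d2_gt0_0 : (0 < d2 0)%N by rewrite /d1 /d2 /= in d1_le_d2_0 *; lia.
split.
- exact: nu_ratio_cvg r_ge3 d1S d2S d1_le_d2_0 d2_gt0_0.
- exact: mu_ratio_cvg r_ge3 d1S d2S d1_le_d2_0 d2_gt0_0.
- move=> /(regular_dims R r_ge3 ekpM)[rd1_gt0 rd1_lt rd2_lt].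
  apply: mu_ratio_decreasing r_ge3 d1S d2S d1_le_d2_0 d2_gt0_0 rd1_gt0 rd1_lt _.
  by rewrite /defect subr_lt0.
- move=> /(regular_dims R r_ge3 ekpM)[_ rd1_lt rd2_lt] preprojN.
  rewrite (preprojective_mu_lt R r_ge3) //=.
  by apply: inv_Lr_pred_lt_mu_ratio; rewrite ?ltr_nat.
Qed.
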